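(* There is a constant $C > 0$ such that for every real $x \ge 2$, $$\sum_{\substack{2 \le n \le x \\ P(n)^2 \le n}} f(n) \le C\, x^{3/2} \log x.$$
   Context: For a positive integer $n$, $f(n)$ denotes the smallest positive integer $m$ such that $n$ divides $m!$. For an integer $n \ge 2$, $P(n)$ denotes the largest prime dividing $n$. $\log$ is the natural logarithm. *)

From Stdlib Require Import Reals.
From mathcomp Require Import all_boot.

Set Implicit Arguments.
Unset Strict Implicit.
Unset Printing Implicit Defensive.

(* f(n) = smallest positive m with n %| m`! (Kempner function), for n >= 1.
   The disjunct (n == 0) only makes the definition total; f(0) = 1 is a
   junk value never used (the sum ranges over n >= 2). *)
Lemma kempner_ex (n : nat) : exists m, ((0 < m) && ((n %| m`!) || (n == 0)))%N.
Proof.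
case: n => [|n]; first by exists 1%N.
exists n.+1; apply/andP; split => //; apply/orP; left; apply: dvdn_fact; by rewrite ltn0Sn leqnn.
Qed.

Definition kempner (n : nat) : nat := ex_minn (kempner_ex n).

Definition P (n : nat) : nat := max_pdiv n.

(* The finite sum  sum_{2 <= n <= x, P(n)^2 <= n} f(n), for real x
   (naturals n with INR n <= x; all such n are < up x). *)
Definition sumF (x : R) : nat :=
  (\sum_(2 <= n < Z.to_nat (up x) | (P n ^ 2 <= n) && (if Rle_dec (INR n) x then true else false))
     kempner n)%N.

(* For n >= 2 with largest prime factor q, every prime power p^e || n has
   p <= q and e <= log2 n, and Legendre's formula shows that p^e divides m!
   as soon as p * e <= m; hence f(n) <= q * log2 n.  When q^2 <= n <= x this
   gives f(n) <= sqrt x * log x / log 2, and summing over at most x values of n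
   yields the bound with C = 2 > 1 / log 2. *)
From Stdlib Require Import Reals Lra ZArith.
From mathcomp Require Import all_boot.
Set Implicit Arguments.
Unset Strict Implicit.

Lemma dvdn_fact_of_logn n m : 0 < n ->
  (forall p, prime p -> p %| n -> p * logn p n <= m) -> n %| m`!.
Proof.
move=> n_gt0 small_pfactors; apply/gcdn_idPl.
apply: eqn_from_log; rewrite ?gcdn_gt0 ?n_gt0 // => p.
rewrite logn_gcd ?fact_gt0 //; apply/minn_idPl.
case: (posnP (logn p n)) => [-> // | ]; rewrite logn_gt0 mem_primes.
case/and3P=> p_pr _ p_dvd_n; have pe_le_m := small_pfactors p p_pr p_dvd_n.
have m_gt0 : 0 < m.
  by apply: leq_trans pe_le_m; rewrite muln_gt0 prime_gt0 // logn_gt0 mem_primes p_pr n_gt0.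
(* The first term of Legendre's formula alone already suffices. *)
rewrite logn_fact // big_ltn ?ltnS // expn1; apply: leq_trans (leq_addr _ _).
by rewrite leq_divRL ?prime_gt0 // mulnC.
Qed.

Lemma logn_le_trunc_log2 p n : prime p -> 0 < n -> logn p n <= trunc_log 2 n.
Proof.
move=> p_pr n_gt0; apply: trunc_log_max => //.
apply: leq_trans (dvdn_leq n_gt0 (pfactor_dvdnn p n)).
case: (posnP (logn p n)) => [-> // | e_gt0].
by rewrite leq_exp2r ?prime_gt1.
Qed.

Lemma kempner_min n m : 0 < m -> n %| m`! -> kempner n <= m.
Proof.
move=> m_gt0 n_dvd; rewrite /kempner; case: ex_minnP => k _ min_k.
by apply: min_k; rewrite m_gt0 n_dvd.
Qed.

Lemma kempner_le_P_log2 n : 1 < n -> kempner n <= P n * trunc_log 2 n.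
Proof.
move=> n_gt1; have n_gt0 : 0 < n by apply: ltnW.
have P_pr : prime (P n) by apply: max_pdiv_prime.
apply: kempner_min; first by rewrite muln_gt0 prime_gt0 // trunc_log_gt0.
apply: dvdn_fact_of_logn => // p p_pr p_dvd_n; apply: leq_mul.
  by apply: max_pdiv_max; rewrite mem_primes p_pr n_gt0.
exact: logn_le_trunc_log2.
Qed.

Open Scope R_scope.

Lemma INR_expn (m k : nat) : INR (m ^ k) = INR m ^ k.
Proof. by elim: k => [|k IH] //=; rewrite expnS mult_INR IH. Qed.

Lemma ln_le a b : 0 < a -> a <= b -> ln a <= ln b.
Proof. by move=> a_gt0 [a_lt_b | <-]; [left; apply: ln_increasing | right]. Qed.

Lemma INR_trunc_log2_le n : (0 < n)%N -> INR (trunc_log 2 n) <= ln (INR n) / ln 2.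
Proof.
move=> n_gt0; have ln2_gt0 : 0 < ln 2 by have := ln_lt_2; lra.
apply: (Rmult_le_reg_r (ln 2)) => //; rewrite /Rdiv Rmult_assoc Rinv_l; last lra.
rewrite Rmult_1_r -ln_pow; last lra.
apply: ln_le; first by apply: pow_lt; lra.
by rewrite -[2]/(INR 2) -INR_expn; apply/le_INR/leP/trunc_logP.
Qed.

Lemma INR_P_le_sqrt n x : (P n ^ 2 <= n)%N -> INR n <= x -> INR (P n) <= sqrt x.
Proof.
move=> Pn2_le_n n_le_x; rewrite -(sqrt_pow2 (INR (P n))); last exact: pos_INR.
apply: sqrt_le_1_alt; rewrite -INR_expn; apply: Rle_trans n_le_x.
exact/le_INR/leP.
Qed.

Lemma kempner_le_sqrt_log x n : (1 < n)%N -> (P n ^ 2 <= n)%N -> INR n <= x ->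
  INR (kempner n) <= sqrt x * (ln x / ln 2).
Proof.
move=> n_gt1 Pn2_le_n n_le_x.
have ln2_gt0 : 0 < ln 2 by have := ln_lt_2; lra.
have n_pos : 0 < INR n by apply: lt_0_INR; apply/ltP/ltnW.
apply: Rle_trans (_ : INR (P n) * INR (trunc_log 2 n) <= _).
  by rewrite -mult_INR; apply/le_INR/leP/kempner_le_P_log2.
apply: Rmult_le_compat; try exact: pos_INR; first exact: INR_P_le_sqrt.
apply: Rle_trans (INR_trunc_log2_le (ltnW n_gt1)) _.
apply: Rmult_le_compat_r; first by left; apply: Rinv_0_lt_compat.
exact: ln_le.
Qed.

Lemma INR_sum_le_size_mul (s : seq nat) (c : pred nat) (F : nat -> nat) B :
  0 <= B -> (forall i, i \in s -> c i -> INR (F i) <= B) ->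
  INR (\sum_(i <- s | c i) F i)%N <= INR (size s) * B.
Proof.
move=> B_ge0; elim: s => [|a s IH] F_le_B; first by rewrite big_nil /=; lra.
rewrite big_cons [size _]/= S_INR.
have IH_s := IH (fun i i_in_s => F_le_B i (mem_behead (s := a :: s) i_in_s)).
case: ifP => c_a; last lra.
by rewrite plus_INR; have := F_le_B a (mem_head _ _) c_a; lra.
Qed.

(* [Z.to_nat (up x) - 2] is the number of candidates [2 <= n < up x] in [sumF]. *)
Lemma INR_up_sub2_le x : 0 <= x -> INR (Z.to_nat (up x) - 2) <= x.
Proof.
move=> x_ge0; have [up_gt_x up_le] := archimed x.
have up_nat : INR (Z.to_nat (up x)) = IZR (up x).
  by rewrite INR_IZR_INZ Z2Nat.id //; apply: le_IZR; lra.
case: (leqP 2 (Z.to_nat (up x))) => [two_le | up_lt2].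
  by have := f_equal INR (subnK two_le); rewrite plus_INR /=; lra.
by have -> : (Z.to_nat (up x) - 2)%N = 0%N by apply/eqP; rewrite subn_eq0 ltnW.
Qed.

Lemma Rpower_3_2 x : 0 < x -> Rpower x (3 / 2) = x * sqrt x.
Proof.
by move=> x_gt0; replace (3 / 2) with (1 + / 2) by field;
  rewrite Rpower_plus Rpower_1 ?Rpower_sqrt.
Qed.

Theorem mainTheorem5 :
  exists C : R, Rlt 0 C /\
    forall x : R, Rle 2 x ->
      Rle (INR (sumF x)) (Rmult (Rmult C (Rpower x (Rdiv 3 2))) (ln x)).
Proof.
exists 2; split; first lra; move=> x x_ge2.
have ln2_gt_half : / 2 < ln 2 by apply: ln_lt_2.
have ln_x_ge0 : 0 <= ln x by rewrite -ln_1; apply: ln_le; lra.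
have inv_ln2_lt2 : 0 < / ln 2 < 2.
  split; first by apply: Rinv_0_lt_compat; lra.
  by apply: (Rmult_lt_reg_r (ln 2)); rewrite ?Rinv_l; lra.
have sqrt_x_ge0 := sqrt_pos x.
have term_ge0 : 0 <= sqrt x * (ln x / ln 2) by apply: Rmult_le_pos; [|apply: Rmult_le_pos; lra].
apply: Rle_trans (_ : INR (size (index_iota 2 (Z.to_nat (up x))))
                        * (sqrt x * (ln x / ln 2)) <= _).
  apply: INR_sum_le_size_mul => // n.
  rewrite mem_index_iota => /andP[n_ge2 _] /andP[Pn2_le_n].
  by case: Rle_dec => // n_le_x _; apply: kempner_le_sqrt_log.
rewrite size_iota.
apply: Rle_trans (Rmult_le_compat_r _ _ _ term_ge0 (INR_up_sub2_le _)) _; first lra.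
rewrite Rpower_3_2; last lra.
have : 0 <= x * sqrt x * ln x by apply: Rmult_le_pos => //; apply: Rmult_le_pos; lra.
rewrite /Rdiv; nra.
Qed.
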